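(* Let $q$ be a prime integer different from $p$. Then: (1) for every $0\le k\le r$, $S^k(q)=(q)=qR_k$; hence $\mathcal S^k(q)=[(q),(q),\dots,(q)]$; (2) for every $1\le\ell\le r$ and $0\le k\le\ell$, $L^{\ell-k}S^k(q)=J_{\ell,k}(q)\subseteq R_\ell$; (3) for every $1\le\ell\le r$ and $0\le k\le\ell-2$, $S\,L^{\ell-k-1}S^k(q)=L^{\ell-k}S^k(q)$. Here the iterated operators start from the ideal $(q)=q\mathbb{Z}\subseteq R_0$.
   Context: Fix a prime $p$ and an integer $r\ge0$. For $0\le k\le r$ let $R_k$ be the commutative ring which is free as a $\mathbb{Z}$-module with basis $X_{k,0},\dots,X_{k,k}$ and multiplication $X_{k,i}X_{k,j}=p^{k-\max(i,j)}X_{k,\min(i,j)}$; thus $X_{k,k}=1$, and an integer $n$ is identified with $nX_{k,k}$. For $0\le k\le\ell\le r$ define: the additive map $\mathrm{ind}^\ell_k:R_k\to R_\ell$, $X_{k,i}\mapsto X_{\ell,i}$; the ring homomorphism $\mathrm{res}^\ell_k:R_\ell\to R_k$, $\mathrm{res}^\ell_k(X_{\ell,i})=p^{\ell-k}X_{k,i}$ if $i\le k$ and $=p^{\ell-i}$ if $i\ge k$; and the multiplicative map $\mathrm{jnd}^\ell_k:R_k\to R_\ell$, $$\mathrm{jnd}^\ell_k\Big(\sum_{i=0}^k m_iX_{k,i}\Big)=m_kX_{\ell,\ell}+\sum_{k\le i<\ell}\frac{m_k^{p^{\ell-i}}-m_k^{p^{\ell-i-1}}}{p^{\ell-i}}X_{\ell,i}+\sum_{0\le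 i<k}\frac{(\sum_{s=i}^k m_sp^{k-s})^{p^{\ell-k}}-(\sum_{s=i+1}^k m_sp^{k-s})^{p^{\ell-k}}}{p^{\ell-i}}X_{\ell,i}$$ ($m_i\in\mathbb{Z}$). For $1\le k\le r$ and an ideal $I\subseteq R_{k-1}$: $L(I)=(\mathrm{res}^k_{k-1})^{-1}(I)\subseteq R_k$, and $S(I)$ is the ideal of $R_k$ generated by $\mathrm{ind}^k_{k-1}(I)\cup\mathrm{jnd}^k_{k-1}(I)$; $L^n,S^n$ denote iterates (each step raising the index by one). For an ideal $\mathscr I=[I_0,\dots,I_{k-1}]$ (sequence of ideals $I_j\subseteq R_j$), $\mathcal S\mathscr I=[I_0,\dots,I_{k-1},S(I_{k-1})]$; $(q)$ also denotes $[q\mathbb{Z}]$. For $0\le i\le\ell$, $F_{\ell,i}=X_{\ell,i}-p^{\ell-i}$; for $0\le k\le\ell$ and $x\in\mathbb{Z}$, $J_{\ell,k}(x)\subseteq R_\ell$ is the ideal generated by $x,F_{\ell,k},\dots,F_{\ell,\ell-1}$ if $k\le\ell-1$, and $J_{\ell,\ell}(x)=xR_\ell$. *)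

From HB Require Import structures.
From mathcomp Require Import all_boot all_order all_algebra.

Import Order.TTheory GRing.Theory Num.Theory.
Local Open Scope ring_scope.

(* Elements of R_k: coefficient vectors w.r.t. the basis X_{k,0},...,X_{k,k}. *)
Definition elt (k : nat) := {ffun 'I_k.+1 -> int}.

Section Rings.
Variable p : nat.

Definition X (k : nat) (i : 'I_k.+1) : elt k := [ffun m => (m == i)%:Z].

(* the integer n seen in R_k, i.e. n X_{k,k} *)
Definition cst (k : nat) (n : int) : elt k :=
  [ffun m : 'I_k.+1 => if (m : nat) == k then n else 0].

Definition eadd (k : nat) (x y : elt k) : elt k := [ffun m => x m + y m].
Definition escale (k : nat) (c : int) (x : elt k) : elt k := [ffun m => c * x m].
Definition ezero (k : nat) : elt k := [ffun m => 0].

(* X_{k,i} X_{k,j} = p^(k - max i j) X_{k, min i j}, extended bilinearly *)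
Definition emul (k : nat) (x y : elt k) : elt k :=
  [ffun m : 'I_k.+1 => \sum_(i < k.+1) \sum_(j < k.+1)
     if minn i j == m then x i * y j * (p ^ (k - maxn i j))%:Z else 0].

Definition resX (l k : nat) (i : 'I_l.+1) : elt k :=
  if (i <= k)%N then escale k (p ^ (l - k))%:Z (X k (inord i))
  else cst k (p ^ (l - i))%:Z.

Definition res (l k : nat) (x : elt l) : elt k :=
  [ffun m : 'I_k.+1 => \sum_(i < l.+1) x i * resX l k i m].

Definition ind (l k : nat) (x : elt k) : elt l :=
  [ffun m : 'I_l.+1 => if (m <= k)%N then x (inord m) else 0].

(* jnd^l_k, by the explicit formula (divisions are exact integer divisions) *)
Definition jnd (l k : nat) (x : elt k) : elt l :=
  let mk := x ord_max in
  [ffun i : 'I_l.+1 =>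
     if (i : nat) == l then mk
     else if (k <= i)%N then
       ((mk ^+ (p ^ (l - i)) - mk ^+ (p ^ (l - i - 1))) %/ (p ^ (l - i))%:Z)%Z
     else
       (((\sum_(s < k.+1 | (i <= s)%N) x s * (p ^ (k - s))%:Z) ^+ (p ^ (l - k))
         - (\sum_(s < k.+1 | (i < s)%N) x s * (p ^ (k - s))%:Z) ^+ (p ^ (l - k)))
        %/ (p ^ (l - i))%:Z)%Z].

Definition is_ideal (k : nat) (I : elt k -> Prop) : Prop :=
  [/\ I (ezero k),
      (forall x y, I x -> I y -> I (eadd k x y)) &
      (forall r x, I x -> I (emul k r x))].

Definition gen (k : nat) (A : elt k -> Prop) : elt k -> Prop :=
  fun x => forall I, is_ideal k I -> (forall a, A a -> I a) -> I x.

Definition principal (k : nat) (a : elt k) : elt k -> Prop :=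
  fun x => exists y, x = emul k a y.

Definition ideal_eq (k : nat) (I J : elt k -> Prop) : Prop := forall x, I x <-> J x.

Definition Lop (k : nat) (I : elt k -> Prop) : elt k.+1 -> Prop :=
  fun y => I (res k.+1 k y).
Definition Sop (k : nat) (I : elt k -> Prop) : elt k.+1 -> Prop :=
  gen k.+1 (fun y => exists x, I x /\ (y = ind k.+1 k x \/ y = jnd k.+1 k x)).

Fixpoint Siter (q : int) (k : nat) : elt k -> Prop :=
  match k with
  | 0 => principal 0 (cst 0 q)
  | k'.+1 => Sop k' (Siter q k')
  end.

Fixpoint Liter (k n : nat) (I : elt k -> Prop) : elt (n + k) -> Prop :=
  match n return elt (n + k) -> Prop with
  | 0 => I
  | n'.+1 => Lop (n' + k) (Liter k n' I)
  end.

Definition F (l : nat) (i : 'I_l.+1) : elt l :=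
  eadd l (X l i) (cst l (- (p ^ (l - i))%:Z)).

Definition J (l k : nat) (x : int) : elt l -> Prop :=
  if (k < l)%N then
    gen l (fun a => a = cst l x \/ exists i : 'I_l.+1, (k <= i < l)%N /\ a = F l i)
  else principal l (cst l x).

End Rings.

(* R_k embeds into Z^(k+1) through its "ghost components"
     ghost_t(x) = sum_(i >= t) x_i p^(k-i)        (0 <= t <= k),
   each of which is a ring morphism R_k -> Z.  In these coordinates the
   operators become transparent: res^(k+1)_k keeps the components t <= k,
   ind multiplies them by p, and jnd raises them to the p-th power (the
   exactness of the divisions defining jnd is Fermat's little theorem and
   lifting the exponent).  Every ideal of the statement is then a "ghost
   ideal"
     M_(l,k) = { y in R_l | q divides ghost_t(y) for all t <= k },
   and the proof consists of the identifications
     qR_l = M_(l,l),   J_(l,k)(q) = M_(l,k)  (k < l),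
     S(M_(l,l)) = M_(l+1,l+1),   S(M_(l,k)) = M_(l+1,k)  (k < l),
     L(M_(l,k)) = M_(l+1,k)  (k <= l).
   The key generation lemma is that M_(l,k) is generated by q and the
   F_(l,i), k <= i < l; from it S^k(q) = M_(k,k) and L^n S^k(q) = M_(n+k,k),
   and the three parts of the proposition follow. *)

From HB Require Import structures.
From mathcomp Require Import all_boot all_order all_algebra.
From mathcomp Require Import finfield ring.
Import Order.TTheory GRing.Theory Num.Theory.
Local Open Scope ring_scope.

Lemma fermat_int p (a : int) : prime p -> (p%:Z %| a ^+ p - a)%Z.
Proof.
move=> pp; rewrite (dvdz_pcharf (pchar_Fp pp)) rmorphB rmorphXn /=.
have := @expf_card _ (a%:~R : 'F_p); rewrite card_Fp // => ->.
by rewrite subrr.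
Qed.

(* Lifting the exponent: if p^e | A - B with e > 0, then p^(e+1) | A^p - B^p,
   because the cofactor sum_i A^(p-1-i) B^i is p B^(p-1) modulo p. *)
Lemma dvdz_subX_lift p e (A B : int) : (0 < e)%N ->
  ((p ^ e)%:Z %| A - B)%Z -> ((p ^ e.+1)%:Z %| A ^+ p - B ^+ p)%Z.
Proof.
move=> e0 h.
have hp : (p%:Z %| A - B)%Z.
  apply: dvdz_trans h; rewrite -(prednK e0) expnS PoszM; exact: dvdz_mulr.
rewrite subrXX expnSr PoszM; apply: dvdz_mul => //.
have -> : \sum_(i < p) A ^+ (p.-1 - i) * B ^+ i =
   \sum_(i < p) (A ^+ (p.-1 - i) - B ^+ (p.-1 - i)) * B ^+ i + \sum_(i < p) B ^+ p.-1.
  rewrite -big_split /=; apply: eq_bigr => i _.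
  rewrite mulrBl -exprD subnK ?subrK //.
  by rewrite -ltnS prednK // (leq_ltn_trans _ (ltn_ord i)).
apply: rpredD.
  apply: rpred_sum => i _; apply: dvdz_mulr; apply: dvdz_trans hp _.
  by rewrite subrXX dvdz_mulr.
by rewrite sumr_const card_ord -mulr_natr dvdz_mull // natz dvdzz.
Qed.

Section Ghost.
Variable p : nat.
Hypothesis p_prime : prime p.

Let p_gt0 : (0 < p)%N := prime_gt0 p_prime.

Definition ghost (k : nat) (x : elt k) (t : nat) : int :=
  \sum_(i < k.+1 | (t <= i)%N) x i * (p ^ (k - i))%:Z.

Lemma ghost_cons k (x : elt k) t : (t <= k)%N ->
  ghost k x t = x (inord t) * (p ^ (k - t))%:Z + ghost k x t.+1.
Proof.
move=> tk; rewrite /ghost (bigD1 (inord t)) /= ?inordK ?leqnn //.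
congr (_ + _); apply: eq_bigl => i.
by rewrite -(inj_eq val_inj) /= inordK // ltn_neqAle eq_sym andbC.
Qed.

Lemma ghost_out k (x : elt k) t : (k < t)%N -> ghost k x t = 0.
Proof.
move=> kt; rewrite /ghost big_pred0 // => i.
by apply/negbTE; rewrite -ltnNge (leq_trans (ltn_ord i) kt).
Qed.

Lemma ghost_top k (x : elt k) : ghost k x k = x ord_max.
Proof.
rewrite ghost_cons // ghost_out // addr0 subnn expn0 mulr1.
by congr (x _); apply/val_inj; rewrite /= inordK.
Qed.

Lemma ghost_zeros l (y : elt l) t : (t <= l)%N ->
  (forall m : 'I_l.+1, (t <= m < l)%N -> y m = 0) -> ghost l y t = y ord_max.
Proof.
move=> tl h; rewrite /ghost (bigD1 ord_max) //= subnn expn0 mulr1 big1 ?addr0 //.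
move=> i /andP [ti ni]; rewrite h ?mul0r // ti /= ltn_neqAle -ltnS ltn_ord andbT.
by apply: contraNneq ni => e; apply/eqP/val_inj.
Qed.

Lemma ghost_inj k (x y : elt k) :
  (forall t, (t <= k)%N -> ghost k x t = ghost k y t) -> x = y.
Proof.
move=> h; apply/ffunP => i.
have ik : (i <= k)%N by rewrite -ltnS.
have := h i ik; rewrite !(ghost_cons _ _ _ ik) inord_val.
have -> : ghost k x i.+1 = ghost k y i.+1.
  by case: (leqP i.+1 k) => [/h //|/[dup] /ghost_out -> /ghost_out ->].
move/addIr; apply: mulIf.
by rewrite eqz_nat -lt0n expn_gt0 p_gt0.
Qed.

Lemma ghost_add k (x y : elt k) t :
  ghost k (eadd k x y) t = ghost k x t + ghost k y t.
Proof. by rewrite /ghost -big_split; apply: eq_bigr => i _; rewrite ffunE mulrDl. Qed.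

Lemma eaddE k (x y : elt k) : eadd k x y = x + y.
Proof. by apply/ffunP => m; rewrite !ffunE. Qed.

Lemma ghostB k (x y : elt k) t : ghost k (x - y) t = ghost k x t - ghost k y t.
Proof. by rewrite /ghost -sumrB; apply: eq_bigr => i _; rewrite !ffunE mulrBl. Qed.

Lemma ghost_sum k I (r : seq I) (P : pred I) (f : I -> elt k) t :
  ghost k (\sum_(i <- r | P i) f i) t = \sum_(i <- r | P i) ghost k (f i) t.
Proof.
rewrite /ghost; under eq_bigr do rewrite sum_ffunE mulr_suml.
exact: exchange_big.
Qed.

Lemma ghost_scale k c (x : elt k) t : ghost k (escale k c x) t = c * ghost k x t.
Proof. by rewrite /ghost mulr_sumr; apply: eq_bigr => i _; rewrite ffunE mulrA. Qed.

Lemma ghost_cst k c t : (t <= k)%N -> ghost k (cst k c) t = c.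
Proof.
move=> tk; rewrite /ghost (bigD1 ord_max) //= ffunE /= eqxx subnn expn0 mulr1.
rewrite big1 ?addr0 // => i /andP [_ ni]; rewrite ffunE ifF ?mul0r //.
by apply: contraNF ni => /eqP ik; apply/eqP/val_inj.
Qed.

Lemma ghost_X k (i : 'I_k.+1) t :
  ghost k (X k i) t = if (t <= i)%N then (p ^ (k - i))%:Z else 0.
Proof.
rewrite /ghost; case: leqP => ti.
  rewrite (bigD1 i) //= ffunE eqxx mul1r big1 ?addr0 // => j /andP [_ ji].
  by rewrite ffunE (negbTE ji) mul0r.
rewrite big1 // => j tj; rewrite ffunE; case: eqP => [ej|]; last by rewrite mul0r.
by move: tj; rewrite ej leqNgt ti.
Qed.

Lemma ghost_mul k (x y : elt k) t :
  ghost k (emul p k x y) t = ghost k x t * ghost k y t.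
Proof.
rewrite /ghost big_distrlr /=.
transitivity (\sum_(i < k.+1) \sum_(j < k.+1) if (t <= minn i j)%N then
   x i * y j * (p ^ (k - maxn i j))%:Z * (p ^ (k - minn i j))%:Z else 0).
  under eq_bigr => m _ do rewrite ffunE mulr_suml.
  rewrite exchange_big /=; apply: eq_bigr => i _.
  under eq_bigr => m _ do rewrite mulr_suml.
  rewrite exchange_big /=; apply: eq_bigr => j _.
  transitivity (\sum_(m < k.+1 | (t <= m)%N && (m == minn i j :> nat))
     x i * y j * (p ^ (k - maxn i j))%:Z * (p ^ (k - m))%:Z).
    rewrite [RHS]big_mkcondr /=; apply: eq_bigr => m _.
    by rewrite eq_sym; case: eqP => _; rewrite ?mul0r.
  rewrite (big_ord1_cond_eq _ (fun m : nat =>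
    x i * y j * (p ^ (k - maxn i j))%:Z * (p ^ (k - m))%:Z)).
  by rewrite (leq_ltn_trans (geq_minl i j) (ltn_ord i)).
rewrite [RHS]big_mkcond; apply: eq_bigr => i _.
case: (leqP t i) => ti /=; last first.
  rewrite big1 // => j _; rewrite ifF //; apply: negbTE; rewrite -ltnNge.
  exact: leq_ltn_trans (geq_minl i j) ti.
rewrite [RHS]big_mkcond; apply: eq_bigr => j _.
rewrite leq_min ti /=; case: (leqP t j) => tj //=.
have e : (p ^ (k - maxn i j))%:Z * (p ^ (k - minn i j))%:Z =
         (p ^ (k - i))%:Z * (p ^ (k - j))%:Z.
  by case: (leqP i j) => ij //; rewrite mulrC.
by rewrite -mulrA e; ring.
Qed.

Lemma ghost_F l (i : 'I_l.+1) t : (t <= l)%N ->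
  ghost l (F p l i) t = (if (t <= i)%N then (p ^ (l - i))%:Z else 0) - (p ^ (l - i))%:Z.
Proof. by move=> tl; rewrite /F ghost_add ghost_X ghost_cst. Qed.

Lemma ghost_F_low l (i : 'I_l.+1) t : (t <= i)%N -> ghost l (F p l i) t = 0.
Proof.
by move=> ti; rewrite ghost_F ?ti ?subrr // (leq_trans ti) // -ltnS.
Qed.

Lemma emul_cstl k c (x : elt k) : emul p k (cst k c) x = escale k c x.
Proof.
by apply: ghost_inj => t tk; rewrite ghost_mul ghost_cst // ghost_scale.
Qed.

Lemma emulC k (x y : elt k) : emul p k x y = emul p k y x.
Proof. by apply: ghost_inj => t tk; rewrite !ghost_mul mulrC. Qed.

Lemma ghost_resX k (i : 'I_k.+2) t : (t <= k)%N ->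
  ghost k (resX p k.+1 k i) t = if (t <= i)%N then (p ^ (k.+1 - i))%:Z else 0.
Proof.
move=> tk; rewrite /resX; case: leqP => ik.
  rewrite ghost_scale ghost_X inordK ?ltnS // subSnn expn1.
  by case: ifP; rewrite ?mulr0 // -PoszM -expnS subSn.
by rewrite ghost_cst // ifT // (leq_trans tk (ltnW ik)).
Qed.

Lemma ghost_res k (x : elt k.+1) t : (t <= k)%N ->
  ghost k (res p k.+1 k x) t = ghost k.+1 x t.
Proof.
move=> tk; rewrite /ghost.
under eq_bigr => m _ do rewrite ffunE mulr_suml.
rewrite exchange_big /= [RHS]big_mkcond; apply: eq_bigr => i _.
under eq_bigr => m _ do rewrite -mulrA.
rewrite -mulr_sumr -/(ghost _ _ t) ghost_resX //.
by case: ifP; rewrite ?mulr0.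
Qed.

Lemma ghost_ind k (x : elt k) t : ghost k.+1 (ind k.+1 k x) t = p%:Z * ghost k x t.
Proof.
rewrite /ghost big_mkcond big_ord_recr /= ffunE /= ltnn mul0r if_same addr0.
rewrite [in RHS]big_mkcond mulr_sumr; apply: eq_bigr => i _; rewrite ffunE /=.
have ik : (i <= k)%N by rewrite -ltnS.
rewrite ik inord_val; case: ifP; rewrite ?mulr0 // => _.
by rewrite subSn // expnS PoszM mulrCA.
Qed.

Lemma ghost_jnd_top k (x : elt k) : ghost k.+1 (jnd p k.+1 k x) k.+1 = x ord_max.
Proof. by rewrite ghost_top ffunE /= eqxx. Qed.

(* The coordinates of jnd x are exact quotients of differences of p-th
   powers of ghost components; exactness is Fermat's little theorem at the
   top and lifting the exponent below. *)
Lemma jnd_coord k (x : elt k) t : (t <= k)%N ->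
  jnd p k.+1 k x (inord t) * (p ^ (k.+1 - t))%:Z =
  ghost k x t ^+ p - (if t == k then ghost k x t else ghost k x t.+1 ^+ p).
Proof.
move=> tk; have tk2 : (t < k.+2)%N by rewrite ltnS ltnW.
rewrite ffunE inordK // ifF; last by apply: ltn_eqF; rewrite ltnS.
case: eqP => [->|/eqP tnk].
  rewrite leqnn subSnn subnn expn1 expn0 expr1 ghost_top.
  by rewrite divzK //; apply: fermat_int.
have tk' : (t < k)%N by rewrite ltn_neqAle tnk.
rewrite leqNgt tk' /= -/(ghost k x t) -/(ghost k x t.+1) subSnn expn1.
rewrite divzK // subSn //; apply: dvdz_subX_lift; first by rewrite subn_gt0.
by rewrite (ghost_cons _ _ _ tk) addrK dvdz_mull.
Qed.

Lemma ghost_jnd k (x : elt k) t : (t <= k)%N ->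
  ghost k.+1 (jnd p k.+1 k x) t = ghost k x t ^+ p.
Proof.
move=> tk; rewrite -(subKn tk); move: (leq_subr t k).
elim: (k - t)%N => [|d IH] hd.
  by rewrite subn0 ghost_cons // jnd_coord // eqxx ghost_jnd_top -ghost_top subrK.
have tk' : (k - d.+1 < k)%N by rewrite ltn_subrL (leq_ltn_trans (leq0n d) hd).
rewrite ghost_cons ?(leq_trans (ltnW tk')) // jnd_coord ?(ltnW tk') //.
by rewrite ifF ?(ltn_eqF tk') // subnSK // IH ?(ltnW hd) //; ring.
Qed.

(* The relations that let S produce the generators F_(l+1,i) of J_(l+1,k)
   from the generators F_(l,i) of J_(l,k):
     F_(l+1,l) = jnd F_(l,l-1) + (-1)^p p^(p-2) ind F_(l,l-1),
     F_(l+1,i) = ind F_(l,i) + p^(l-i) F_(l+1,l)       for i < l. *)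
Lemma F_top l (i : 'I_l.+2) (j : 'I_l.+1) : (0 < l)%N ->
  (i : nat) = l -> (j : nat) = l.-1 ->
  F p l.+1 i = eadd l.+1 (jnd p l.+1 l (F p l j))
     (escale l.+1 ((-1) ^+ p * (p ^ p.-2)%:Z) (ind l.+1 l (F p l j))).
Proof.
move=> l0 iv jv; have p1 := prime_gt1 p_prime.
have e1 : (l - l.-1)%N = 1%N by rewrite -{1}(prednK l0) subSnn.
apply: ghost_inj => t ht; rewrite ghost_add ghost_scale ghost_ind.
case: (ltnP t l.+1) => tl.
  rewrite ltnS in tl; rewrite ghost_jnd // !ghost_F // iv jv subSnn e1 tl expn1.
  case: ifP => _; first by rewrite subrr expr0n eqn0Ngt p_gt0 !mulr0 addr0.
  have -> : (p ^ p.-2)%:Z = p%:Z ^+ p.-2 by rewrite -!natz natrX.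
  have -> : p = p.-2.+2 by rewrite -subn2 subnSK // subn1 prednK.
  rewrite /= sub0r !exprS (exprNn (Posz p.-2.+2)); ring.
have -> : t = l.+1 by apply/eqP; rewrite eqn_leq ht tl.
rewrite ghost_jnd_top (ghost_out l) // ghost_F // iv ltnn subSnn expn1.
rewrite !ffunE /= eqxx jv e1 expn1 mulr0 mulr0 addr0.
suff -> : (ord_max == j) = false by [].
by apply/negbTE; rewrite -(inj_eq val_inj) /= jv neq_ltn ltn_predL l0 orbT.
Qed.

Lemma F_low l (i iL : 'I_l.+2) : (i < l)%N -> (iL : nat) = l ->
  F p l.+1 i = eadd l.+1 (ind l.+1 l (F p l (inord i)))
     (escale l.+1 (p ^ (l - i))%:Z (F p l.+1 iL)).
Proof.
move=> il iLv; have il' : (i < l.+1)%N by apply: ltnW.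
apply: ghost_inj => t ht.
rewrite ghost_add ghost_ind ghost_scale (ghost_F _ i) // (ghost_F _ iL) // iLv.
rewrite subSn ?(ltnW il) // subSnn expn1 expnS PoszM.
case: (ltnP t l.+1) => tl.
  by rewrite ltnS in tl; rewrite ghost_F // inordK // tl; case: ifP => _; ring.
have -> : t = l.+1 by apply/eqP; rewrite eqn_leq ht tl.
rewrite ghost_out // ltnn ifF; last by apply/negbTE; rewrite -ltnNge ltnS ltnW.
ring.
Qed.

Lemma ideal_add k (I : elt k -> Prop) (x y : elt k) :
  is_ideal p k I -> I x -> I y -> I (x + y).
Proof. by case=> _ hD _ hx hy; rewrite -eaddE; apply: hD. Qed.

Lemma ideal_sum k (I : elt k -> Prop) J (r : seq J) (P : pred J) (f : J -> elt k) :
  is_ideal p k I -> (forall j, P j -> I (f j)) -> I (\sum_(j <- r | P j) f j).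
Proof.
move=> hI hf; apply: big_ind => //; last by move=> x y; apply: ideal_add.
by case: hI => h0 _ _; congr I: h0; apply/ffunP => m; rewrite !ffunE.
Qed.

Lemma ideal_scale k (I : elt k -> Prop) c (x : elt k) :
  is_ideal p k I -> I x -> I (escale k c x).
Proof. by case=> _ _ hM hx; rewrite -emul_cstl; apply: hM. Qed.

Lemma ideal_scale_cst k (I : elt k -> Prop) c (x : elt k) :
  is_ideal p k I -> I (cst k c) -> I (escale k c x).
Proof. by case=> _ _ hM hc; rewrite -emul_cstl emulC; apply: hM. Qed.

Lemma gen_eq k (A B : elt k -> Prop) : is_ideal p k B ->
  (forall a, A a -> B a) ->
  (forall I, is_ideal p k I -> (forall a, A a -> I a) -> forall b, B b -> I b) ->
  ideal_eq k (gen p k A) B.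
Proof.
move=> hB hAB hBI x; split; first by move=> hx; apply: hx.
by move=> hx I hI hA; apply: hBI hI hA x hx.
Qed.

Lemma Sop_eq l (I : elt l -> Prop) (B : elt l.+1 -> Prop) : is_ideal p l.+1 B ->
  (forall x, I x -> B (ind l.+1 l x) /\ B (jnd p l.+1 l x)) ->
  (forall K, is_ideal p l.+1 K ->
     (forall x, I x -> K (ind l.+1 l x) /\ K (jnd p l.+1 l x)) ->
     forall b, B b -> K b) ->
  ideal_eq l.+1 (Sop p l I) B.
Proof.
move=> hB hIB hBK; apply: gen_eq => //.
  by move=> a [x [hx [->|->]]]; [exact: (hIB x hx).1 | exact: (hIB x hx).2].
move=> K hK hIK; apply: hBK => // x hx.
by split; apply: hIK; exists x; split=> //; [left | right].
Qed.

Lemma F_succ_closed l k (K : elt l.+1 -> Prop) : (k < l)%N -> is_ideal p l.+1 K ->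
  (forall i : 'I_l.+1, (k <= i < l)%N ->
     K (ind l.+1 l (F p l i)) /\ K (jnd p l.+1 l (F p l i))) ->
  forall i : 'I_l.+2, (k <= i < l.+1)%N -> K (F p l.+1 i).
Proof.
move=> kl hK hF.
have l0 : (0 < l)%N by apply: leq_ltn_trans kl.
have top : forall i : 'I_l.+2, (i : nat) = l -> K (F p l.+1 i).
  move=> i iv; pose j : 'I_l.+1 := inord l.-1.
  have jv : (j : nat) = l.-1 by rewrite inordK // prednK // ltnW.
  have [hind hjnd] : K (ind l.+1 l (F p l j)) /\ K (jnd p l.+1 l (F p l j)).
    have kj : (k <= l.-1)%N by rewrite -ltnS prednK.
    by apply: hF; rewrite jv kj ltn_predL.
  rewrite (F_top l i j l0 iv jv) eaddE.
  by apply: ideal_add => //; apply: ideal_scale.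
move=> i /andP [ki]; rewrite ltnS leq_eqVlt; case/orP=> [/eqP|il]; first exact: top.
have lv : ((inord l : 'I_l.+2) : nat) = l by rewrite inordK.
rewrite (F_low l i (inord l) il lv) eaddE; apply: ideal_add => //.
  by apply: (hF _ _).1; rewrite inordK ?ki // ltnW.
by apply: ideal_scale => //; apply: top.
Qed.

Section GhostIdeal.
Variable q : nat.
Hypotheses (q_prime : prime q) (q_neq_p : q <> p).

Definition ghost_ideal (l k : nat) (y : elt l) : Prop :=
  forall t, (t <= k)%N -> (q%:Z %| ghost l y t)%Z.

Lemma ghost_ideal_is_ideal l k : is_ideal p l (ghost_ideal l k).
Proof.
split.
- by move=> t _; rewrite /ghost big1 ?dvdz0 // => i _; rewrite ffunE mul0r.
- by move=> x y hx hy t tk; rewrite ghost_add rpredD ?hx ?hy.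
- by move=> r x hx t tk; rewrite ghost_mul dvdz_mull ?hx.
Qed.

Lemma ghost_ideal_full l (y : elt l) :
  ghost_ideal l l y -> forall t, (q%:Z %| ghost l y t)%Z.
Proof. by move=> h t; case: (leqP t l) => [/h //|/ghost_out ->]; apply: dvdz0. Qed.

Lemma coprime_q_pow e : coprimez q%:Z (p ^ e)%:Z.
Proof.
rewrite coprimezE /= coprimeXr // prime_coprime // dvdn_prime2 //.
exact/eqP.
Qed.

(* As y_m p^(l-m) is the difference of the ghost components m and m+1 and
   q is prime to p, q divides y_m when it divides both components. *)
Lemma coord_dvd l (y : elt l) (m : 'I_l.+1) :
  (q%:Z %| ghost l y m)%Z -> (q%:Z %| ghost l y m.+1)%Z -> (q%:Z %| y m)%Z.
Proof.
move=> h1 h2; have ml : (m <= l)%N by rewrite -ltnS.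
move: h1; rewrite ghost_cons // inord_val => h1.
have : (q%:Z %| y m * (p ^ (l - m))%:Z)%Z.
  by rewrite -(addrK (ghost l y m.+1) (y m * _)) rpredB.
by rewrite Gauss_dvdzl // coprime_q_pow.
Qed.

Lemma ghost_ideal_coords l k (y : elt l) : (k <= l)%N -> ghost_ideal l k y ->
  (forall m : 'I_l.+1, (k <= m < l)%N -> y m = 0) -> forall m, (q%:Z %| y m)%Z.
Proof.
move=> kl hy hz m; case: (ltnP m k) => mk.
  by apply: coord_dvd; apply: hy => //; apply: ltnW.
case: (ltnP m l) => ml; first by rewrite hz ?mk ?ml // dvdz0.
have -> : m = ord_max by apply/val_inj/eqP; rewrite /= eqn_leq ml -ltnS ltn_ord.
by rewrite -(ghost_zeros l y k kl hz); apply: hy.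
Qed.

Lemma escale_divq l (y : elt l) :
  (forall m, (q%:Z %| y m)%Z) -> y = escale l q%:Z [ffun m => (y m %/ q%:Z)%Z].
Proof. by move=> h; apply/ffunP => m; rewrite !ffunE mulrC divzK. Qed.

Lemma principal_ghost l (y : elt l) :
  principal p l (cst l q%:Z) y <-> ghost_ideal l l y.
Proof.
split=> [[z ->] t tl|h]; first by rewrite ghost_mul ghost_cst // dvdz_mulr.
exists [ffun m => (y m %/ q%:Z)%Z]; rewrite emul_cstl; apply: escale_divq.
apply: (ghost_ideal_coords l l y (leqnn l) h) => m /andP [lm ml].
by rewrite ltnNge lm in ml.
Qed.

Lemma F_ghost l k (i : 'I_l.+1) : (k <= i)%N -> ghost_ideal l k (F p l i).
Proof. by move=> ki t tk; rewrite ghost_F_low ?dvdz0 // (leq_trans tk ki). Qed.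

Lemma F_coord l (i m : 'I_l.+1) : (m < l)%N -> F p l i m = (m == i)%:Z.
Proof. by move=> ml; rewrite !ffunE ifF ?addr0 // ltn_eqF. Qed.

(* M_(l,k) is contained in every ideal containing q and the F_(l,i) for
   k <= i < l: subtracting sum_i y_i F_(l,i) from y kills the coordinates
   k, ..., l-1 without changing the ghost components t <= k, and what is
   left is a multiple of q. *)
Lemma ghost_ideal_least l k (I : elt l -> Prop) : (k <= l)%N -> is_ideal p l I ->
  I (cst l q%:Z) -> (forall i : 'I_l.+1, (k <= i < l)%N -> I (F p l i)) ->
  forall y, ghost_ideal l k y -> I y.
Proof.
move=> kl hI hq hF y hy.
pose c := \sum_(i < l.+1 | (k <= i < l)%N) escale l (y i) (F p l i).
have c_mid : forall m : 'I_l.+1, (k <= m < l)%N -> c m = y m.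
  move=> m /andP [km ml]; rewrite sum_ffunE (bigD1 m) ?km ?ml //= big1.
    by rewrite ffunE F_coord // eqxx mulr1 addr0.
  by move=> i /andP [_ im]; rewrite ffunE F_coord // eq_sym (negbTE im) mulr0.
have hd : ghost_ideal l k (y - c).
  move=> t tk; rewrite ghostB ghost_sum big1 ?subr0; first exact: hy.
  move=> i /andP [ki _].
  by rewrite ghost_scale ghost_F_low ?mulr0 // (leq_trans tk ki).
have dq : forall m, (q%:Z %| (y - c) m)%Z.
  by apply: (ghost_ideal_coords l k _ kl hd) => m hm; rewrite !ffunE c_mid ?subrr.
rewrite -(subrK c y); apply: ideal_add => //.
  by rewrite (escale_divq _ _ dq); apply: ideal_scale_cst.
by apply: ideal_sum => // i hi; apply: ideal_scale => //; apply: hF.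
Qed.

(* An ideal of R_(l+1) containing ind q and jnd q contains q, so S(I) contains
   q whenever I does: by Fermat p | q^(p-1) - 1 (as q is prime to p), and
   q = jnd q - ((q^(p-1) - 1)/p) ind q in R_(l+1). *)
Lemma cst_q_Sop l (K : elt l.+1 -> Prop) : is_ideal p l.+1 K ->
  K (ind l.+1 l (cst l q%:Z)) -> K (jnd p l.+1 l (cst l q%:Z)) -> K (cst l.+1 q%:Z).
Proof.
move=> hK hi hj.
have hdiv : (p%:Z %| q%:Z ^+ p.-1 - 1)%Z.
  have := fermat_int p q%:Z p_prime.
  rewrite -{1}(prednK p_gt0) exprS -[X in _ - X](mulr1 (q%:Z)) -mulrBr.
  rewrite Gauss_dvdzr // coprimezE /= prime_coprime // dvdn_prime2 //.
  by apply/eqP => e; apply: q_neq_p.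
pose c := - ((q%:Z ^+ p.-1 - 1) %/ p%:Z)%Z.
have -> : cst l.+1 q%:Z =
    eadd l.+1 (jnd p l.+1 l (cst l q%:Z)) (escale l.+1 c (ind l.+1 l (cst l q%:Z))).
  apply: ghost_inj => t ht; rewrite ghost_add ghost_scale ghost_ind ghost_cst //.
  case: (ltnP t l.+1) => tl.
    rewrite ghost_jnd // ghost_cst // /c mulrA mulNr divzK //.
    by rewrite -[in q%:Z ^+ p](prednK p_gt0) exprS; ring.
  have -> : t = l.+1 by apply/eqP; rewrite eqn_leq ht tl.
  by rewrite ghost_jnd_top ghost_out // ffunE /= eqxx; ring.
by rewrite eaddE; apply: ideal_add => //; apply: ideal_scale.
Qed.

Lemma ghost_ideal_ind l k (x : elt l) :
  ghost_ideal l k x -> ghost_ideal l.+1 k (ind l.+1 l x).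
Proof. by move=> hx t tk; rewrite ghost_ind dvdz_mull ?hx. Qed.

Lemma ghost_ideal_jnd l k (x : elt l) : (k <= l)%N ->
  ghost_ideal l k x -> ghost_ideal l.+1 k (jnd p l.+1 l x).
Proof.
move=> kl hx t tk; rewrite ghost_jnd ?(leq_trans tk kl) //.
by apply: dvdz_exp => //; apply: hx.
Qed.

Lemma Sop_ghost_top l (I : elt l -> Prop) :
  ideal_eq l I (ghost_ideal l l) -> ideal_eq l.+1 (Sop p l I) (ghost_ideal l.+1 l.+1).
Proof.
move=> hI; apply: Sop_eq; first exact: ghost_ideal_is_ideal.
  move=> x /hI hx; split; first by apply: ghost_ideal_ind => t _; apply: ghost_ideal_full.
  move=> t; rewrite leq_eqVlt => /orP [/eqP ->|tl].
    by rewrite ghost_jnd_top -ghost_top; apply: hx.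
  exact: (ghost_ideal_jnd l l x (leqnn l) hx t tl).
move=> K hK hIK; apply: ghost_ideal_least => // [|i /andP [li il]].
  have hq : I (cst l q%:Z) by apply/hI => t tl; rewrite ghost_cst ?dvdzz.
  by apply: cst_q_Sop => //; [apply: (hIK _ hq).1 | apply: (hIK _ hq).2].
by rewrite ltnNge li in il.
Qed.

Lemma Sop_ghost l k (I : elt l -> Prop) : (k < l)%N ->
  ideal_eq l I (ghost_ideal l k) -> ideal_eq l.+1 (Sop p l I) (ghost_ideal l.+1 k).
Proof.
move=> kl hI; apply: Sop_eq; first exact: ghost_ideal_is_ideal.
  move=> x /hI hx; split; first exact: ghost_ideal_ind.
  by apply: ghost_ideal_jnd => //; apply: ltnW.
move=> K hK hIK; have hF (i : 'I_l.+1) : (k <= i)%N -> I (F p l i).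
  by move=> ki; apply/hI/F_ghost.
apply: ghost_ideal_least => //; first exact: leq_trans (ltnW kl) (leqnSn l).
  have hq : I (cst l q%:Z).
    by apply/hI => t tk; rewrite ghost_cst ?dvdzz // (leq_trans tk (ltnW kl)).
  by apply: cst_q_Sop => //; [apply: (hIK _ hq).1 | apply: (hIK _ hq).2].
by apply: F_succ_closed => // i /andP [ki _]; apply: hIK; apply: hF.
Qed.

Lemma Lop_ghost l k (I : elt l -> Prop) : (k <= l)%N ->
  ideal_eq l I (ghost_ideal l k) -> ideal_eq l.+1 (Lop p l I) (ghost_ideal l.+1 k).
Proof.
move=> kl hI y; rewrite /Lop (hI _).
by split=> h t tk; move: (h t tk); rewrite ghost_res // (leq_trans tk kl).
Qed.

Lemma Siter_ghost k : ideal_eq k (Siter p q%:Z k) (ghost_ideal k k).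
Proof.
elim: k => [|k IH] /=; first by move=> y; apply: principal_ghost.
exact: Sop_ghost_top.
Qed.

Lemma Liter_ghost k n :
  ideal_eq (n + k) (Liter p k n (Siter p q%:Z k)) (ghost_ideal (n + k) k).
Proof.
elim: n => [|n IH] /=; first exact: Siter_ghost.
by apply: Lop_ghost => //; apply: leq_addl.
Qed.

Lemma J_ghost l k : (k < l)%N -> ideal_eq l (J p l k q%:Z) (ghost_ideal l k).
Proof.
move=> kl; rewrite /J kl; apply: gen_eq; first exact: ghost_ideal_is_ideal.
  move=> a [->|[i [/andP [ki _] ->]]]; last exact: F_ghost.
  by move=> t tk; rewrite ghost_cst ?dvdzz // (leq_trans tk (ltnW kl)).
move=> I hI hA; apply: ghost_ideal_least => //; first exact: ltnW.
  by apply: hA; left.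
by move=> i hi; apply: hA; right; exists i.
Qed.

End GhostIdeal.
End Ghost.

Theorem proposition6 (p q r : nat) (hp : prime p) (hq : prime q) (hqp : q <> p) :
  (* (1) S^k(q) = qR_k for 0 <= k <= r *)
  (forall k : nat, (k <= r)%N ->
     ideal_eq k (Siter p q%:Z k) (principal p k (cst k q%:Z))) /\
  (* (2) with l = n + k, 1 <= l <= r : L^(l-k) S^k(q) = J_{l,k}(q) *)
  (forall k n : nat, (1 <= n + k <= r)%N ->
     ideal_eq (n + k) (Liter p k n (Siter p q%:Z k)) (J p (n + k) k q%:Z)) /\
  (* (3) with l = n + 1 + k, 1 <= l <= r, 0 <= k <= l - 2 (i.e. n >= 1) :
         S L^(l-k-1) S^k(q) = L^(l-k) S^k(q) *)
  (forall k n : nat, (1 <= n)%N -> (n.+1 + k <= r)%N ->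
     ideal_eq (n + k).+1 (Sop p (n + k) (Liter p k n (Siter p q%:Z k))) (Liter p k n.+1 (Siter p q%:Z k))).
Proof.
have part1 k : ideal_eq k (Siter p q%:Z k) (principal p k (cst k q%:Z)).
  by move=> y; rewrite (Siter_ghost p hp q hq hqp k y) (principal_ghost p hp q hq hqp).
split; first by move=> k _; apply: part1.
split=> [k [|n] _ y|k n n1 _ y].
- by rewrite /J ltnn; apply: part1.
- rewrite (Liter_ghost p hp q hq hqp k n.+1 y) (J_ghost p hp q hq hqp) //.
  by rewrite addSn ltnS leq_addl.
rewrite (Liter_ghost p hp q hq hqp k n.+1 y); move: y; apply: Sop_ghost => //.
  by rewrite -(prednK n1) addSn ltnS leq_addl.
exact: Liter_ghost.
Qed.
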